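(* Let $(X,d)$ be a $\delta$-Gromov hyperbolic space, $p\in X$, $\epsilon>0$, and $X^\epsilon=(X,d_\epsilon)$ the uniformized space. If the Gehring-Hayman property for metric boundary points holds for $X^\epsilon$, then the Gehring-Hayman property for Gromov sequences holds for $X^\epsilon$.
   Context: Gromov product $(x|y)_p=\frac12(d(p,x)+d(p,y)-d(x,y))$. $\delta$-Gromov hyperbolic: unbounded, proper, geodesic, and $(x|z)_p\ge\min\{(x|y)_p,(y|z)_p\}-\delta$ for all $x,y,z,p$. Uniformized metric: $d_\epsilon(x,y)=\inf_\gamma\int_\gamma e^{-\epsilon d(p,z)}ds(z)$ over $d$-rectifiable curves from $x$ to $y$; $l_{d_\epsilon}$ is length with respect to $d_\epsilon$; $\partial_{d_\epsilon}X^\epsilon=\overline{X^\epsilon}\setminus X^\epsilon$ (closure in the completion); $[x,y]$ denotes a $d$-geodesic. A Gromov sequence is $(x_n)$ with $(x_n|x_m)_p\to\infty$ as $n,m\to\infty$. GH property for Gromov sequences: for each Gromov sequence $(x_n)$ there is $C\ge1$ with $l_{d_\epsilon}([x_n,x_m])\le Cd_\epsilon(x_n,x_m)$ for all $n,m$. GH property for metric boundary points: for every $x\in\partial_{d_\epsilon}X^\epsilon$ and every $(x_n)\subseteq X$ with $d_\epsilon(x_n,x)\to0$ there is $C\ge1$ with $l_{d_\epsilon}([x_n,x_m])\le Cd_\epsilon(x_n,x_m)$ for all $n,m$. *)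

From Stdlib Require Import Reals Lra List.
From Coquelicot Require Import Coquelicot.
Open Scope R_scope.

Section Defs.
Context {X : Type}.

Definition is_metric (d : X -> X -> R) : Prop :=
  (forall x y, 0 <= d x y) /\ (forall x y, d x y = 0 <-> x = y) /\
  (forall x y, d x y = d y x) /\ (forall x y z, d x z <= d x y + d y z).

Definition converges_to (D : X -> X -> R) (u : nat -> X) (x : X) : Prop :=
  is_lim_seq (fun n => D (u n) x) 0.

Definition is_cauchy (D : X -> X -> R) (u : nat -> X) : Prop :=
  forall e, 0 < e -> exists N, forall n m, (N <= n)%nat -> (N <= m)%nat -> D (u n) (u m) < e.

Definition proper (d : X -> X -> R) : Prop :=
  forall (x : X) (r : R) (s : nat -> X), (forall n, d x (s n) <= r) ->
    exists (phi : nat -> nat) (y : X),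
      (forall n, (phi n < phi (S n))%nat) /\ d x y <= r /\ converges_to d (fun n => s (phi n)) y.

Definition unbounded (d : X -> X -> R) : Prop :=
  forall M, exists x y, M < d x y.

Definition is_geodesic (d : X -> X -> R) (g : R -> X) (x y : X) : Prop :=
  g 0 = x /\ g (d x y) = y /\
  forall s t, 0 <= s <= d x y -> 0 <= t <= d x y -> d (g s) (g t) = Rabs (s - t).

Definition geodesic_space (d : X -> X -> R) : Prop :=
  forall x y, exists g, is_geodesic d g x y.

Definition gromov_product (d : X -> X -> R) (p x y : X) : R :=
  (d p x + d p y - d x y) / 2.

Definition gromov_hyperbolic (d : X -> X -> R) (delta : R) : Prop :=
  is_metric d /\ 0 <= delta /\ unbounded d /\ proper d /\ geodesic_space d /\
  forall x y z p, gromov_product d p x z >=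
     Rmin (gromov_product d p x y) (gromov_product d p y z) - delta.

(* partition a = t0 <= t1 <= ... <= tk = b, given as the list [t1;...;tk] *)
Fixpoint incr_from (t : R) (l : list R) : Prop :=
  match l with nil => True | t' :: l' => t <= t' /\ incr_from t' l' end.

Definition is_partition (a b : R) (l : list R) : Prop :=
  incr_from a l /\ last (a :: l) a = b.

Fixpoint var_sum (D : X -> X -> R) (g : R -> X) (t : R) (l : list R) : R :=
  match l with nil => 0 | t' :: l' => D (g t) (g t') + var_sum D g t' l' end.

Definition curve_length (D : X -> X -> R) (g : R -> X) (a b : R) : Rbar :=
  Lub_Rbar (fun v => exists l, is_partition a b l /\ v = var_sum D g a l).

Definition continuous_curve (d : X -> X -> R) (g : R -> X) (a b : R) : Prop :=
  forall t, a <= t <= b -> forall e, 0 < e -> exists eta, 0 < eta /\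
    forall s, a <= s <= b -> Rabs (s - t) < eta -> d (g s) (g t) < e.

Definition rectifiable (d : X -> X -> R) (g : R -> X) (a b : R) : Prop :=
  a <= b /\ continuous_curve d g a b /\ is_finite (curve_length d g a b).

Definition sup_on (rho : X -> R) (g : R -> X) (s t : R) : R :=
  real (Lub_Rbar (fun v => exists u, s <= u <= t /\ v = rho (g u))).

Fixpoint upper_sum (d : X -> X -> R) (rho : X -> R) (g : R -> X) (t : R) (l : list R) : R :=
  match l with
  | nil => 0
  | t' :: l' => sup_on rho g t t' * real (curve_length d g t t') + upper_sum d rho g t' l'
  end.

(* line integral  \int_g rho ds  for continuous rho >= 0 along a rectifiable curve,
   defined as the Riemann--Stieltjes integral of rho o g with respect to arc length
   (infimum of upper Darboux--Stieltjes sums) *)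
Definition line_integral (d : X -> X -> R) (rho : X -> R) (g : R -> X) (a b : R) : R :=
  real (Glb_Rbar (fun v => exists l, is_partition a b l /\ v = upper_sum d rho g a l)).

Definition uniformized (d : X -> X -> R) (p : X) (eps : R) (x y : X) : R :=
  real (Glb_Rbar (fun v => exists (g : R -> X) (a b : R),
     rectifiable d g a b /\ g a = x /\ g b = y /\
     v = line_integral d (fun z => exp (- eps * d p z)) g a b)).

Definition gromov_sequence (d : X -> X -> R) (p : X) (xs : nat -> X) : Prop :=
  forall M, exists N, forall n m, (N <= n)%nat -> (N <= m)%nat ->
    M <= gromov_product d p (xs n) (xs m).

(* ---------- metric boundary ----------
   The completion of (X,D) is realised as D-Cauchy sequences in X; the distance from
   y in X to the point represented by u is lim_k D y (u k).  Since X is dense in its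
   completion, the closure of X is the whole completion, so boundary points are the
   (classes of) Cauchy sequences not at distance 0 from any point of X. *)
Definition dist_to_completion_pt (D : X -> X -> R) (y : X) (u : nat -> X) : R :=
  real (Lim_seq (fun k => D y (u k))).

Definition metric_boundary_point (D : X -> X -> R) (u : nat -> X) : Prop :=
  is_cauchy D u /\ forall y : X, dist_to_completion_pt D y u <> 0.

Definition GH_bound (d : X -> X -> R) (p : X) (eps : R) (xs : nat -> X) : Prop :=
  exists C, 1 <= C /\ forall (n m : nat) (g : R -> X), is_geodesic d g (xs n) (xs m) ->
    Rbar_le (curve_length (uniformized d p eps) g 0 (d (xs n) (xs m)))
            (Finite (C * uniformized d p eps (xs n) (xs m))).

Definition GH_gromov_sequences (d : X -> X -> R) (p : X) (eps : R) : Prop :=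
  forall xs : nat -> X, gromov_sequence d p xs -> GH_bound d p eps xs.

Definition GH_metric_boundary (d : X -> X -> R) (p : X) (eps : R) : Prop :=
  forall u : nat -> X, metric_boundary_point (uniformized d p eps) u ->
  forall xs : nat -> X,
    is_lim_seq (fun n => dist_to_completion_pt (uniformized d p eps) (xs n) u) 0 ->
    GH_bound d p eps xs.

End Defs.

(* A Gromov sequence (x_n) is Cauchy for d_eps and stays at positive d_eps-distance from
   every point of X, so it represents a point of the metric boundary, and x_n tends to that
   point; the Gehring-Hayman property at that boundary point is then exactly the one required
   for (x_n). Both facts follow from two estimates for the weight exp(-eps d(p,.)):
   integrating it along any curve gives
     exp(-eps d(p,x)) - exp(-eps d(p,y)) <= eps d_eps(x,y),
   and integrating it along a geodesic [x,y], on which d(p,.) grows at unit rate away from the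
   point at distance (p|y)_x from x, gives
     d_eps(x,y) <= 2 exp(-eps (x|y)_p) / (1 - exp(-eps)). *)

From Stdlib Require Import Reals Lra List.
From Coquelicot Require Import Coquelicot.
Open Scope R_scope.

Lemma last_cons (l : list R) x d : last (x :: l) d = last l x.
Proof.
  revert x d; induction l as [|y l IH]; intros x d; [reflexivity|].
  change (last (y :: l) d = last (y :: l) x). now rewrite !IH.
Qed.

Lemma last_app (l1 l2 : list R) t : last (l1 ++ l2) t = last l2 (last l1 t).
Proof.
  revert t; induction l1 as [|y l IH]; intros t; [reflexivity|].
  rewrite <- app_comm_cons, !last_cons. apply IH.
Qed.

Lemma incr_from_last (l : list R) t : incr_from t l -> t <= last l t.
Proof.
  revert t; induction l as [|y l IH]; intros t Hl; [simpl; lra|].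
  destruct Hl as [Hty Hl]. rewrite last_cons. specialize (IH _ Hl). lra.
Qed.

Lemma incr_from_app (l1 l2 : list R) t :
  incr_from t l1 -> incr_from (last l1 t) l2 -> incr_from t (l1 ++ l2).
Proof.
  revert t; induction l1 as [|y l IH]; intros t H1 H2; [exact H2|].
  destruct H1 as [Hty H1]. split; [exact Hty|]. apply IH; [exact H1|].
  now rewrite <- (last_cons l y t).
Qed.

Lemma is_partition_single a b : a <= b -> is_partition a b (b :: nil).
Proof. intros Hab. split; simpl; auto. Qed.

Lemma is_partition_app a b c l1 l2 :
  is_partition a b l1 -> is_partition b c l2 -> is_partition a c (l1 ++ l2).
Proof.
  intros [H1 E1] [H2 E2]. rewrite last_cons in E1, E2. split.
  - apply incr_from_app; [exact H1|]. now rewrite E1.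
  - now rewrite last_cons, last_app, E1.
Qed.

Lemma real_Lub_Rbar_bounds (E : R -> Prop) v0 c :
  E v0 -> (forall v, E v -> v <= c) ->
  (forall v, E v -> v <= real (Lub_Rbar E)) /\ real (Lub_Rbar E) <= c.
Proof.
  intros H0 Hc. destruct (Lub_Rbar_correct E) as [Hub Hlub].
  assert (Hle : Rbar_le (Lub_Rbar E) c) by (apply Hlub; exact Hc).
  assert (H0le := Hub _ H0).
  destruct (Lub_Rbar E) as [r| |]; simpl in *; tauto.
Qed.

Lemma real_Glb_Rbar_bounds (E : R -> Prop) v0 c :
  E v0 -> (forall v, E v -> c <= v) ->
  (forall v, E v -> real (Glb_Rbar E) <= v) /\ c <= real (Glb_Rbar E).
Proof.
  intros H0 Hc. destruct (Glb_Rbar_correct E) as [Hlb Hglb].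
  assert (Hle : Rbar_le c (Glb_Rbar E)) by (apply Hglb; exact Hc).
  assert (H0le := Hlb _ H0).
  destruct (Glb_Rbar E) as [r| |]; simpl in *; tauto.
Qed.

Lemma real_Lim_seq_bounds (u : nat -> R) a b :
  eventually (fun k => a <= u k <= b) -> a <= real (Lim_seq u) <= b.
Proof.
  intros [N HN].
  assert (Ha : Rbar_le (Lim_seq (fun _ => a)) (Lim_seq u))
    by (apply Lim_seq_le_loc; exists N; intros k Hk; apply HN, Hk).
  assert (Hb : Rbar_le (Lim_seq u) (Lim_seq (fun _ => b)))
    by (apply Lim_seq_le_loc; exists N; intros k Hk; apply HN, Hk).
  rewrite Lim_seq_const in Ha, Hb.
  destruct (Lim_seq u); simpl in *; tauto.
Qed.

Section Curves.
Context {X : Type}.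

Lemma var_sum_app (D : X -> X -> R) g (l1 l2 : list R) t :
  var_sum D g t (l1 ++ l2) = var_sum D g t l1 + var_sum D g (last l1 t) l2.
Proof.
  revert t; induction l1 as [|y l IH]; intros t; [simpl; ring|].
  rewrite <- app_comm_cons, last_cons. simpl var_sum. rewrite IH. ring.
Qed.

Lemma upper_sum_app (d : X -> X -> R) rho g (l1 l2 : list R) t :
  upper_sum d rho g t (l1 ++ l2) = upper_sum d rho g t l1 + upper_sum d rho g (last l1 t) l2.
Proof.
  revert t; induction l1 as [|y l IH]; intros t; [simpl; ring|].
  rewrite <- app_comm_cons, last_cons. simpl upper_sum. rewrite IH. ring.
Qed.

Lemma sup_on_bounds (rho : X -> R) g s t c :
  s <= t -> (forall u, s <= u <= t -> rho (g u) <= c) ->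
  rho (g s) <= sup_on rho g s t <= c.
Proof.
  intros Hst Hc. unfold sup_on.
  destruct (real_Lub_Rbar_bounds (fun v => exists u, s <= u <= t /\ v = rho (g u))
              (rho (g s)) c) as [Hub Hle].
  - exists s. split; [lra|reflexivity].
  - intros v [u [Hu ->]]. now apply Hc.
  - split; [|exact Hle]. apply Hub. exists s. split; [lra|reflexivity].
Qed.

Lemma sup_on_nonneg (rho : X -> R) g s t :
  s <= t -> (forall z, 0 <= rho z) -> 0 <= sup_on rho g s t.
Proof.
  intros Hst Hrho. unfold sup_on.
  destruct (Lub_Rbar_correct (fun v => exists u, s <= u <= t /\ v = rho (g u))) as [Hub _].
  assert (Hs := Hub (rho (g s)) (ex_intro _ s (conj (conj (Rle_refl s) Hst) eq_refl))).
  specialize (Hrho (g s)).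
  destruct (Lub_Rbar _); simpl in *; lra.
Qed.

Lemma dist_le_curve_length (D : X -> X -> R) g s t :
  s <= t -> Rbar_le (D (g s) (g t)) (curve_length D g s t).
Proof.
  intros Hst. unfold curve_length.
  destruct (Lub_Rbar_correct (fun v => exists l, is_partition s t l /\ v = var_sum D g s l))
    as [Hub _].
  apply Hub. exists (t :: nil). split; [now apply is_partition_single|simpl; ring].
Qed.

Lemma real_curve_length_nonneg (D : X -> X -> R) g s t :
  (forall x y, 0 <= D x y) -> s <= t -> 0 <= real (curve_length D g s t).
Proof.
  intros HD Hst. assert (H := dist_le_curve_length D g s t Hst).
  specialize (HD (g s) (g t)). destruct (curve_length D g s t); simpl in *; lra.
Qed.

Lemma curve_length_mono (D : X -> X -> R) g a s t b :
  (forall x y, 0 <= D x y) -> a <= s -> t <= b ->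
  Rbar_le (curve_length D g s t) (curve_length D g a b).
Proof.
  intros HD Has Htb. unfold curve_length at 1.
  destruct (Lub_Rbar_correct (fun v => exists l, is_partition s t l /\ v = var_sum D g s l))
    as [_ Hlub].
  apply Hlub. intros v [l [Hl ->]].
  assert (Hpart : is_partition a b ((s :: nil) ++ l ++ (b :: nil))).
  { apply (is_partition_app a s); [now apply is_partition_single|].
    apply (is_partition_app s t); [exact Hl|now apply is_partition_single]. }
  apply Rbar_le_trans with (var_sum D g a ((s :: nil) ++ l ++ (b :: nil))).
  - destruct Hl as [_ Ht]. rewrite last_cons in Ht.
    rewrite !var_sum_app. simpl last. rewrite Ht. simpl.
    pose proof (HD (g a) (g s)). pose proof (HD (g t) (g b)). lra.
  - unfold curve_length.
    destruct (Lub_Rbar_correct (fun v => exists l, is_partition a b l /\ v = var_sum D g a l))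
      as [Hub _].
    apply Hub. eexists. split; [exact Hpart|reflexivity].
Qed.

Lemma rectifiable_dist_le_length (d : X -> X -> R) g a b s t :
  (forall x y, 0 <= d x y) -> rectifiable d g a b -> a <= s -> s <= t -> t <= b ->
  d (g s) (g t) <= real (curve_length d g s t).
Proof.
  intros Hd [_ [_ Hfin]] Has Hst Htb.
  assert (Hlo := dist_le_curve_length d g s t Hst).
  assert (Hhi := curve_length_mono d g a s t b Hd Has Htb).
  rewrite <- Hfin in Hhi.
  destruct (curve_length d g s t); simpl in *; tauto.
Qed.

Lemma upper_sum_nonneg (d : X -> X -> R) rho g t l :
  (forall x y, 0 <= d x y) -> (forall z, 0 <= rho z) -> incr_from t l ->
  0 <= upper_sum d rho g t l.
Proof.
  intros Hd Hrho. revert t; induction l as [|y l IH]; intros t Hl; simpl; [lra|].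
  destruct Hl as [Hty Hl].
  pose proof (sup_on_nonneg rho g t y Hty Hrho).
  pose proof (real_curve_length_nonneg d g t y Hd Hty).
  specialize (IH y Hl). nra.
Qed.

Lemma line_integral_ge (d : X -> X -> R) rho g a b c :
  a <= b -> (forall l, is_partition a b l -> c <= upper_sum d rho g a l) ->
  c <= line_integral d rho g a b.
Proof.
  intros Hab Hc. unfold line_integral.
  apply (real_Glb_Rbar_bounds _ (upper_sum d rho g a (b :: nil))).
  - exists (b :: nil). split; [now apply is_partition_single|reflexivity].
  - intros v [l [Hl ->]]. now apply Hc.
Qed.

Definition has_upper_sum_le (d : X -> X -> R) rho g s t B : Prop :=
  exists l, is_partition s t l /\ upper_sum d rho g s l <= B.

Lemma has_upper_sum_le_weaken (d : X -> X -> R) rho g s t B B' :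
  B <= B' -> has_upper_sum_le d rho g s t B -> has_upper_sum_le d rho g s t B'.
Proof. intros HB [l [Hl Hsum]]. exists l. split; [exact Hl|lra]. Qed.

Lemma has_upper_sum_le_concat (d : X -> X -> R) rho g s r t B1 B2 :
  has_upper_sum_le d rho g s r B1 -> has_upper_sum_le d rho g r t B2 ->
  has_upper_sum_le d rho g s t (B1 + B2).
Proof.
  intros [l1 [Hl1 H1]] [l2 [Hl2 H2]]. exists (l1 ++ l2).
  split; [exact (is_partition_app s r t l1 l2 Hl1 Hl2)|].
  destruct Hl1 as [_ Hr]. rewrite last_cons in Hr.
  rewrite upper_sum_app, Hr. lra.
Qed.

Lemma line_integral_le (d : X -> X -> R) rho g a b B :
  (forall x y, 0 <= d x y) -> (forall z, 0 <= rho z) -> has_upper_sum_le d rho g a b B ->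
  line_integral d rho g a b <= B.
Proof.
  intros Hd Hrho [l [Hl HB]]. unfold line_integral.
  apply Rle_trans with (upper_sum d rho g a l); [|exact HB].
  apply (real_Glb_Rbar_bounds _ (upper_sum d rho g a l) 0).
  - exists l. split; [exact Hl|reflexivity].
  - intros v [l' [[Hl' _] ->]]. now apply upper_sum_nonneg.
  - exists l. split; [exact Hl|reflexivity].
Qed.

Lemma line_integral_nonneg (d : X -> X -> R) rho g a b :
  (forall x y, 0 <= d x y) -> (forall z, 0 <= rho z) -> a <= b ->
  0 <= line_integral d rho g a b.
Proof.
  intros Hd Hrho Hab. apply line_integral_ge; [exact Hab|].
  intros l [Hl _]. now apply upper_sum_nonneg.
Qed.

Lemma uniformized_ge (d : X -> X -> R) p eps x y c :
  (exists g a b, rectifiable d g a b /\ g a = x /\ g b = y) ->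
  (forall g a b, rectifiable d g a b -> g a = x -> g b = y ->
     c <= line_integral d (fun z => exp (- eps * d p z)) g a b) ->
  c <= uniformized d p eps x y.
Proof.
  intros [g [a [b [Hg [Ha Hb]]]]] Hc. unfold uniformized.
  apply (real_Glb_Rbar_bounds _ (line_integral d (fun z => exp (- eps * d p z)) g a b)).
  - exists g, a, b. auto.
  - intros v [g' [a' [b' [Hg' [Ha' [Hb' ->]]]]]]. now apply Hc.
Qed.

Lemma uniformized_le_line_integral (d : X -> X -> R) p eps g a b :
  (forall x y, 0 <= d x y) -> rectifiable d g a b ->
  uniformized d p eps (g a) (g b) <= line_integral d (fun z => exp (- eps * d p z)) g a b.
Proof.
  intros Hd Hg. unfold uniformized.
  apply (real_Glb_Rbar_bounds _ (line_integral d (fun z => exp (- eps * d p z)) g a b) 0).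
  - exists g, a, b. auto.
  - intros v [g' [a' [b' [[Hab' _] [_ [_ ->]]]]]].
    apply line_integral_nonneg; [exact Hd|intros z; apply Rlt_le, exp_pos|exact Hab'].
  - exists g, a, b. auto.
Qed.

Lemma geodesic_var_sum (d : X -> X -> R) g x y l s :
  is_geodesic d g x y -> 0 <= s -> incr_from s l -> last l s <= d x y ->
  var_sum d g s l = last l s - s.
Proof.
  intros [_ [_ Hiso]]. revert s; induction l as [|t l IH]; intros s Hs Hl Hlast; [simpl; ring|].
  destruct Hl as [Hst Hl]. rewrite last_cons in Hlast |- *.
  pose proof (incr_from_last l t Hl).
  simpl var_sum. rewrite IH, Hiso, Rabs_left1 by (assumption || lra). ring.
Qed.

Lemma geodesic_curve_length (d : X -> X -> R) g x y s t :
  is_geodesic d g x y -> 0 <= s -> s <= t -> t <= d x y ->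
  curve_length d g s t = t - s.
Proof.
  intros Hg Hs Hst Ht. unfold curve_length. apply is_lub_Rbar_unique. split.
  - intros v [l [[Hl Hlast] ->]]. rewrite last_cons in Hlast.
    rewrite (geodesic_var_sum d g x y l s Hg Hs Hl) by lra. simpl. lra.
  - intros B HB. apply HB. exists (t :: nil). split; [now apply is_partition_single|].
    rewrite (geodesic_var_sum d g x y (t :: nil) s Hg Hs); simpl; auto.
Qed.

Lemma geodesic_rectifiable (d : X -> X -> R) g x y :
  (forall x y, 0 <= d x y) -> is_geodesic d g x y -> rectifiable d g 0 (d x y).
Proof.
  intros Hd Hg. pose proof (Hd x y) as Hxy. split; [exact Hxy|split].
  - intros t Ht e He. exists e. split; [exact He|]. intros s Hs Hst.
    destruct Hg as [_ [_ Hiso]]. now rewrite Hiso.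
  - now rewrite (geodesic_curve_length d g x y 0 (d x y)) by (assumption || lra).
Qed.

Lemma geodesic_space_rectifiably_connected (d : X -> X -> R) x y :
  (forall x y, 0 <= d x y) -> geodesic_space d ->
  exists g a b, rectifiable d g a b /\ g a = x /\ g b = y.
Proof.
  intros Hd Hgeo. destruct (Hgeo x y) as [g Hg]. pose proof Hg as [Hg0 [HgL _]].
  exists g, 0, (d x y). split; [exact (geodesic_rectifiable d g x y Hd Hg)|auto].
Qed.

End Curves.

Lemma exp_le_exp_of_le x y : x <= y -> exp x <= exp y.
Proof.
  intros [Hlt | ->]; [now apply Rlt_le, exp_increasing|apply Rle_refl].
Qed.

Lemma exp_neg_tangent (a r r' : R) :
  exp (- a * r) - exp (- a * r') <= a * exp (- a * r) * (r' - r).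
Proof.
  assert (E : exp (- a * r') = exp (- a * r) * exp (- a * (r' - r)))
    by (rewrite <- exp_plus; f_equal; ring).
  pose proof (exp_ineq1_le (- a * (r' - r))). pose proof (exp_pos (- a * r)).
  rewrite E. nra.
Qed.

Definition geom_factor (eps : R) : R := / (1 - exp (- eps)).

Lemma geom_factor_ge_1 eps : 0 < eps -> 1 <= geom_factor eps.
Proof.
  intros Heps. unfold geom_factor.
  assert (exp (- eps) < 1) by (rewrite <- exp_0; apply exp_increasing; lra).
  pose proof (exp_pos (- eps)).
  rewrite <- Rinv_1. apply Rinv_le_contravar; lra.
Qed.

Lemma exp_neg_geom_step eps c : 0 < eps ->
  exp (- eps * c) + exp (- eps * (c + 1)) * geom_factor eps = exp (- eps * c) * geom_factor eps.
Proof.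
  intros Heps. unfold geom_factor.
  assert (exp (- eps) < 1) by (rewrite <- exp_0; apply exp_increasing; lra).
  replace (- eps * (c + 1)) with (- eps * c + - eps) by ring. rewrite exp_plus.
  field. lra.
Qed.

Section Uniformization.
Context {X : Type} (d : X -> X -> R) (p : X) (eps : R).
Hypothesis d_metric : is_metric d.
Hypothesis eps_pos : 0 < eps.

Let d_nonneg : forall x y, 0 <= d x y := proj1 d_metric.
Let d_sym : forall x y, d x y = d y x := proj1 (proj2 (proj2 d_metric)).
Let d_triangle : forall x y z, d x z <= d x y + d y z := proj2 (proj2 (proj2 d_metric)).

Local Notation rho := (fun z => exp (- eps * d p z)).

Lemma weight_le_1 z : exp (- eps * d p z) <= 1.
Proof. rewrite <- exp_0. apply exp_le_exp_of_le. pose proof (d_nonneg p z). nra. Qed.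

Lemma weight_drop_le_piece g a b t t' :
  rectifiable d g a b -> a <= t -> t <= t' -> t' <= b ->
  exp (- eps * d p (g t)) - exp (- eps * d p (g t'))
    <= eps * (sup_on rho g t t' * real (curve_length d g t t')).
Proof.
  intros Hg Hat Htt Htb.
  destruct (sup_on_bounds rho g t t' 1 Htt) as [Hsup _]; [intros u _; apply weight_le_1|].
  assert (Hlen := rectifiable_dist_le_length d g a b t t' d_nonneg Hg Hat Htt Htb).
  pose proof (d_triangle p (g t) (g t')). pose proof (d_nonneg (g t) (g t')).
  pose proof (exp_neg_tangent eps (d p (g t)) (d p (g t'))).
  pose proof (exp_pos (- eps * d p (g t))).
  set (S := sup_on _ _ _ _) in *. set (L := real _) in *.
  set (w := exp (- eps * d p (g t))) in *. simpl in Hsup.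
  assert (Hdrop : w * (d p (g t') - d p (g t)) <= S * L).
  { destruct (Rle_lt_dec (d p (g t')) (d p (g t))); nra. }
  nra.
Qed.

Lemma weight_drop_le_upper_sum g a b l t :
  rectifiable d g a b -> a <= t -> incr_from t l -> last l t <= b ->
  exp (- eps * d p (g t)) - exp (- eps * d p (g (last l t))) <= eps * upper_sum d rho g t l.
Proof.
  intros Hg. revert t; induction l as [|y l IH]; intros t Hat Hl Hlast; [simpl; lra|].
  destruct Hl as [Hty Hl]. rewrite last_cons in Hlast |- *.
  pose proof (incr_from_last l y Hl).
  pose proof (weight_drop_le_piece g a b t y Hg Hat Hty ltac:(lra)).
  specialize (IH y ltac:(lra) Hl Hlast).
  simpl upper_sum. lra.
Qed.

Lemma weight_drop_le_uniformized x y :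
  geodesic_space d ->
  exp (- eps * d p x) - exp (- eps * d p y) <= eps * uniformized d p eps x y.
Proof.
  intros Hgeo. set (c := exp (- eps * d p x) - exp (- eps * d p y)).
  replace c with (eps * (c / eps)) by (field; lra).
  apply Rmult_le_compat_l; [lra|].
  apply uniformized_ge; [exact (geodesic_space_rectifiably_connected d x y d_nonneg Hgeo)|].
  intros g a b Hg <- <-. apply line_integral_ge; [exact (proj1 Hg)|].
  intros l [Hl Hlast]. rewrite last_cons in Hlast.
  pose proof (weight_drop_le_upper_sum g a b l a Hg (Rle_refl a) Hl ltac:(lra)) as Hdrop.
  rewrite Hlast in Hdrop.
  apply Rmult_le_reg_l with eps; [exact eps_pos|].
  replace (eps * (c / eps)) with c by (field; lra). exact Hdrop.
Qed.

Lemma uniformized_nonneg x y : geodesic_space d -> 0 <= uniformized d p eps x y.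
Proof.
  intros Hgeo.
  apply uniformized_ge; [exact (geodesic_space_rectifiably_connected d x y d_nonneg Hgeo)|].
  intros g a b [Hab _] _ _.
  apply line_integral_nonneg; [exact d_nonneg|intros z; apply Rlt_le, exp_pos|exact Hab].
Qed.

Lemma geodesic_short_piece g x y s t c :
  is_geodesic d g x y -> 0 <= s -> s <= t -> t <= d x y -> t - s <= 1 ->
  (forall u, s <= u <= t -> c <= d p (g u)) ->
  has_upper_sum_le d rho g s t (exp (- eps * c)).
Proof.
  intros Hg Hs Hst Ht Hshort Hc. exists (t :: nil).
  split; [now apply is_partition_single|]. simpl upper_sum.
  rewrite (geodesic_curve_length d g x y s t Hg Hs Hst Ht). simpl real.
  destruct (sup_on_bounds rho g s t (exp (- eps * c)) Hst) as [Hlo Hhi].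
  { intros u Hu. apply exp_le_exp_of_le. specialize (Hc u Hu). nra. }
  pose proof (exp_pos (- eps * d p (g s))). simpl in Hlo. nra.
Qed.

Lemma geodesic_decay_right g x y s t c :
  is_geodesic d g x y -> 0 <= s -> s <= t -> t <= d x y ->
  (forall u, s <= u <= t -> c + (u - s) <= d p (g u)) ->
  has_upper_sum_le d rho g s t (exp (- eps * c) * geom_factor eps).
Proof.
  intros Hg Hs Hst Ht. destruct (INR_unbounded (t - s)) as [n Hn].
  revert s c Hs Hst Hn. induction n as [|n IH]; intros s c Hs Hst Hn Hc.
  all: destruct (Rle_lt_dec (t - s) 1) as [Hshort|Hlong].
  1, 3: apply has_upper_sum_le_weaken with (exp (- eps * c));
    [pose proof (geom_factor_ge_1 eps eps_pos); pose proof (exp_pos (- eps * c)); nra|];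
    apply (geodesic_short_piece g x y); auto; intros u Hu; specialize (Hc u Hu); lra.
  - simpl in Hn. lra.
  - rewrite S_INR in Hn. rewrite <- exp_neg_geom_step by exact eps_pos.
    apply has_upper_sum_le_concat with (s + 1).
    + apply (geodesic_short_piece g x y); try (assumption || lra).
      intros u Hu. specialize (Hc u ltac:(lra)). lra.
    + apply IH; try (assumption || lra). intros u Hu. specialize (Hc u ltac:(lra)). lra.
Qed.

Lemma geodesic_decay_left g x y s t c :
  is_geodesic d g x y -> 0 <= s -> s <= t -> t <= d x y ->
  (forall u, s <= u <= t -> c + (t - u) <= d p (g u)) ->
  has_upper_sum_le d rho g s t (exp (- eps * c) * geom_factor eps).
Proof.
  intros Hg Hs Hst Ht. destruct (INR_unbounded (t - s)) as [n Hn].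
  revert t c Hst Ht Hn. induction n as [|n IH]; intros t c Hst Ht Hn Hc.
  all: destruct (Rle_lt_dec (t - s) 1) as [Hshort|Hlong].
  1, 3: apply has_upper_sum_le_weaken with (exp (- eps * c));
    [pose proof (geom_factor_ge_1 eps eps_pos); pose proof (exp_pos (- eps * c)); nra|];
    apply (geodesic_short_piece g x y); auto; intros u Hu; specialize (Hc u Hu); lra.
  - simpl in Hn. lra.
  - rewrite S_INR in Hn. rewrite <- exp_neg_geom_step by exact eps_pos.
    rewrite Rplus_comm. apply has_upper_sum_le_concat with (t - 1).
    + apply IH; try (assumption || lra). intros u Hu. specialize (Hc u ltac:(lra)). lra.
    + apply (geodesic_short_piece g x y); try (assumption || lra).
      intros u Hu. specialize (Hc u ltac:(lra)). lra.
Qed.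

Lemma uniformized_le_gromov_product x y :
  geodesic_space d ->
  uniformized d p eps x y <= 2 * geom_factor eps * exp (- eps * gromov_product d p x y).
Proof.
  intros Hgeo. destruct (Hgeo x y) as [g Hg]. pose proof Hg as [Hg0 [HgL Hiso]].
  set (k := gromov_product d p x y).
  (* [m] is the Gromov product (p|y)_x, so that d(p, g u) >= k + |u - m| on [0, d x y]. *)
  set (m := d p x - k).
  assert (Hm : 0 <= m <= d x y).
  { pose proof (d_triangle p x y). pose proof (d_triangle p y x). rewrite (d_sym y x) in *.
    unfold m, k, gromov_product. lra. }
  assert (Hfrom_x : forall u, 0 <= u <= d x y -> d p x <= d p (g u) + u).
  { intros u Hu. rewrite <- Hg0 at 1. pose proof (d_triangle p (g u) (g 0)).
    rewrite Hiso, Rabs_right in * by lra. lra. }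
  assert (Hfrom_y : forall u, 0 <= u <= d x y -> d p y <= d p (g u) + (d x y - u)).
  { intros u Hu. rewrite <- HgL at 1. pose proof (d_triangle p (g u) (g (d x y))).
    rewrite Hiso, Rabs_left1 in * by lra. lra. }
  assert (Hle := uniformized_le_line_integral d p eps g 0 (d x y) d_nonneg
                   (geodesic_rectifiable d g x y d_nonneg Hg)).
  rewrite Hg0, HgL in Hle. apply (Rle_trans _ _ _ Hle).
  apply line_integral_le; [exact d_nonneg|intros z; apply Rlt_le, exp_pos|].
  apply has_upper_sum_le_weaken with
    (exp (- eps * k) * geom_factor eps + exp (- eps * k) * geom_factor eps); [lra|].
  apply has_upper_sum_le_concat with m.
  - apply (geodesic_decay_left g x y); try (assumption || lra).
    intros u Hu. specialize (Hfrom_x u ltac:(lra)). unfold m in *. lra.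
  - apply (geodesic_decay_right g x y); try (assumption || lra).
    intros u Hu. specialize (Hfrom_y u ltac:(lra)). unfold m, k, gromov_product in *. lra.
Qed.

End Uniformization.

Lemma exp_neg_lt_eventually eps e :
  0 < eps -> 0 < e -> exists M, forall r, M <= r -> exp (- eps * r) < e.
Proof.
  intros Heps He. exists (- ln (e / 2) / eps). intros r Hr.
  apply Rle_lt_trans with (exp (ln (e / 2))); [|rewrite exp_ln; lra].
  apply exp_le_exp_of_le.
  apply Rmult_le_compat_l with (r := eps) in Hr; [|lra].
  replace (eps * (- ln (e / 2) / eps)) with (- ln (e / 2)) in Hr by (field; lra). lra.
Qed.

Lemma cauchy_seq_converges_in_completion {X : Type} (D : X -> X -> R) u :
  (forall x y, 0 <= D x y) -> is_cauchy D u ->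
  is_lim_seq (fun n => dist_to_completion_pt D (u n) u) 0.
Proof.
  intros HD Hu. apply is_lim_seq_spec. intros [e He]. simpl.
  destruct (Hu (e / 2)) as [N HN]; [lra|].
  exists N. intros n Hn. unfold dist_to_completion_pt.
  assert (Hlim : 0 <= real (Lim_seq (fun k => D (u n) (u k))) <= e / 2).
  { apply real_Lim_seq_bounds. exists N. intros k Hk.
    split; [apply HD|apply Rlt_le, HN; assumption]. }
  rewrite Rminus_0_r, Rabs_right; lra.
Qed.

Section GromovSequences.
Context {X : Type} (d : X -> X -> R) (p : X) (eps : R).
Hypothesis d_metric : is_metric d.
Hypothesis d_geodesic : geodesic_space d.
Hypothesis eps_pos : 0 < eps.

Lemma gromov_product_nonneg x y : 0 <= gromov_product d p x y.
Proof.
  destruct d_metric as [_ [_ [Hsym Htri]]]. unfold gromov_product.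
  pose proof (Htri x p y). rewrite (Hsym x p) in *. lra.
Qed.

Lemma gromov_product_diag x : gromov_product d p x x = d p x.
Proof.
  destruct d_metric as [_ [Hzero _]]. unfold gromov_product.
  rewrite (proj2 (Hzero x x) eq_refl). field.
Qed.

Lemma gromov_sequence_uniformized_cauchy xs :
  gromov_sequence d p xs -> is_cauchy (uniformized d p eps) xs.
Proof.
  intros Hxs e He. set (K := 2 * geom_factor eps).
  assert (HK : 0 < K) by (pose proof (geom_factor_ge_1 eps eps_pos); unfold K; lra).
  destruct (exp_neg_lt_eventually eps (e / K) eps_pos) as [M HM];
    [apply Rdiv_lt_0_compat; lra|].
  destruct (Hxs M) as [N HN]. exists N. intros n m Hn Hm.
  pose proof (uniformized_le_gromov_product d p eps d_metric eps_pos (xs n) (xs m) d_geodesic)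
    as Hup.
  specialize (HM _ (HN n m Hn Hm)).
  apply Rmult_lt_compat_l with (r := K) in HM; [|exact HK].
  replace (K * (e / K)) with e in HM by (field; lra). unfold K in *. lra.
Qed.

Lemma gromov_sequence_far_from_points xs y :
  gromov_sequence d p xs -> dist_to_completion_pt (uniformized d p eps) y xs <> 0.
Proof.
  intros Hxs. set (w := exp (- eps * d p y)).
  assert (Hw : 0 < w) by apply exp_pos.
  destruct (exp_neg_lt_eventually eps (w / 2) eps_pos) as [M HM]; [lra|].
  destruct (Hxs M) as [N HN].
  assert (Hlim : w / (2 * eps) <= dist_to_completion_pt (uniformized d p eps) y xs
                 <= 2 * geom_factor eps).
  { apply real_Lim_seq_bounds. exists N. intros k Hk. split.
    - pose proof (weight_drop_le_uniformized d p eps d_metric eps_pos y (xs k) d_geodesic).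
      specialize (HN k k Hk Hk). rewrite gromov_product_diag in HN. specialize (HM _ HN).
      apply Rmult_le_reg_l with eps; [exact eps_pos|].
      replace (eps * (w / (2 * eps))) with (w / 2) by (field; lra).
      unfold w in *. lra.
    - pose proof (uniformized_le_gromov_product d p eps d_metric eps_pos y (xs k) d_geodesic).
      assert (exp (- eps * gromov_product d p y (xs k)) <= 1).
      { rewrite <- exp_0. apply exp_le_exp_of_le.
        pose proof (gromov_product_nonneg y (xs k)). nra. }
      pose proof (geom_factor_ge_1 eps eps_pos). nra. }
  assert (0 < w / (2 * eps)) by (apply Rdiv_lt_0_compat; lra).
  lra.
Qed.

End GromovSequences.

Theorem lemma3p1 (X : Type) (d : X -> X -> R) (delta : R) (p : X) (eps : R) :
  gromov_hyperbolic d delta -> 0 < eps ->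
  GH_metric_boundary d p eps -> GH_gromov_sequences d p eps.
Proof.
  intros [Hd [_ [_ [_ [Hgeo _]]]]] Heps HGH xs Hxs.
  assert (Hcauchy := gromov_sequence_uniformized_cauchy d p eps Hd Hgeo Heps xs Hxs).
  apply (HGH xs).
  - split; [exact Hcauchy|]. intros y.
    exact (gromov_sequence_far_from_points d p eps Hd Hgeo Heps xs y Hxs).
  - apply cauchy_seq_converges_in_completion; [|exact Hcauchy].
    intros x y. exact (uniformized_nonneg d p eps Hd x y Hgeo).
Qed.
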